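(* Fix the number of treatment days $N\ge1$ and consider the problem: minimize $Y_{N-1}^+$ over doses $d_0,\dots,d_{N-1}\ge0$ subject to $\sum_{k=0}^{N-1}\mathrm{BED}_O(d_k)\le c$. Assume $\phi(x)>0$ for all $x>0$ and that $\phi$ is non-increasing in $x$. If $[\alpha/\beta]_O\ge\gamma[\alpha/\beta]_T$, then it is optimal to deliver a single dose $$d_{N-1}^*=\frac{[\alpha/\beta]_O}{2\gamma}\left[\sqrt{1+\frac{4c}{[\alpha/\beta]_O}}-1\right]$$ on the last day and $d_i=0$ for $i<N-1$. If $[\alpha/\beta]_O<\gamma[\alpha/\beta]_T$, then any optimal sequence of doses satisfies $d_0^*\le d_1^*\le\cdots\le d_{N-1}^*$.
   Context: Model: Tumor parameters $\alpha_T>0$, $\beta_T>0$, $[\alpha/\beta]_T=\alpha_T/\beta_T$; organ-at-risk (OAR) parameter $[\alpha/\beta]_O>0$; sparing factor $0<\gamma<1$; OAR limit $c>0$. Define $\mathrm{BED}_T(d)=d\left(1+\frac{d}{[\alpha/\beta]_T}\right)$ and $\mathrm{BED}_O(d)=\gamma d\left(1+\frac{\gamma d}{[\alpha/\beta]_O}\right)$. Tumor growth between doses follows $\frac{1}{x}\frac{dx}{dt}=\phi(x)$, with $\phi:(0,\infty)\to\mathbb{R}$ continuous and non-increasing. Doses $d_0,\dots,d_{N-1}$ are delivered at times $0,1,\dots,N-1$. With $Y=\ln(\text{number of tumor cells})/\alpha_T$, let $F$ be the one-day growth map for $Y$ under the ODE. With initial cell number $X_0>0$ and $Y_0^-=\ln(X_0)/\alpha_T$: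 $Y_0^+=Y_0^--\mathrm{BED}_T(d_0)$, $Y_{i+1}^+=F(Y_i^+)-\mathrm{BED}_T(d_{i+1})$ for $i=0,\dots,N-2$. *)

From Stdlib Require Import Reals Lra.
Open Scope R_scope.

(* Biologically effective doses. abT = [alpha/beta]_T, abO = [alpha/beta]_O. *)
Definition BEDT (abT d : R) : R := d * (1 + d / abT).
Definition BEDO (abO gam d : R) : R := gam * d * (1 + gam * d / abO).

Fixpoint sumR (n : nat) (f : nat -> R) : R :=
  match n with O => 0 | S m => sumR m f + f m end.

(* F is the one-day growth map for Y = ln(cells)/alphaT under
   (1/x) dx/dt = phi(x): starting from x(0) = exp(alphaT*y), the
   (positive) solution x of dx/dt = x*phi(x) on [0,1] gives F y = ln(x 1)/alphaT. *)
Definition is_growth_map (alphaT : R) (phi : R -> R) (F : R -> R) : Prop :=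
  forall y : R, exists x : R -> R,
    x 0 = exp (alphaT * y) /\
    (forall t, 0 <= t <= 1 -> 0 < x t /\ derivable_pt_lim x t (x t * phi (x t))) /\
    F y = ln (x 1) / alphaT.

Fixpoint Yplus (F : R -> R) (abT Y0 : R) (d : nat -> R) (i : nat) : R :=
  match i with
  | O => Y0 - BEDT abT (d O)
  | S j => F (Yplus F abT Y0 d j) - BEDT abT (d (S j))
  end.

(* Feasible dose sequences d_0..d_{N-1} (values d k for k >= N are irrelevant). *)
Definition feasible (N : nat) (abO gam c : R) (d : nat -> R) : Prop :=
  (forall k, (k < N)%nat -> 0 <= d k) /\
  sumR N (fun k => BEDO abO gam (d k)) <= c.

Definition optimal (N : nat) (F : R -> R) (abT abO gam c Y0 : R) (d : nat -> R) : Prop :=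
  feasible N abO gam c d /\
  forall d', feasible N abO gam c d' ->
    Yplus F abT Y0 d (N - 1) <= Yplus F abT Y0 d' (N - 1).

Definition last_day_dose (N : nat) (abO gam c : R) : nat -> R :=
  fun i => if Nat.eqb i (N - 1)
           then abO / (2 * gam) * (sqrt (1 + 4 * c / abO) - 1)
           else 0.

(* Let clock v := ∫_0^v ds / phi(e^s).  Along a solution of the growth ODE,
   clock (ln x(t)) - t is constant, so clock (alphaT F y) = clock (alphaT y) + 1
   and F is strictly increasing; since phi is non-increasing, the gap in log-size
   between two solutions cannot grow, i.e. F z - F y <= z - y for y <= z.
   Hence Y_(N-1)^+ >= F^(N-1)(Y_0) - sum_k BED_T(d_k), with equality for a single
   dose on the last day.  If [alpha/beta]_O >= gam [alpha/beta]_T, the ratio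
   BED_T/BED_O is non-decreasing in the dose, so the single dose exhausting the
   budget maximizes sum_k BED_T(d_k).  Otherwise, if d_i > d_(i+1), replacing both
   doses by the dose whose BED_O is their mean stays feasible, strictly increases
   BED_T(d_i) + BED_T(d_(i+1)), and by the two properties of F strictly lowers
   every later state, contradicting optimality. *)

From Stdlib Require Import Reals Lra Lia Psatz.
From Coquelicot Require Import Coquelicot.
Open Scope R_scope.

Lemma sumR_ext n f g : (forall k, (k < n)%nat -> f k = g k) -> sumR n f = sumR n g.
Proof.
  induction n as [|n IH]; simpl; intros Hfg; [reflexivity|].
  rewrite IH by (intros; apply Hfg; lia). rewrite (Hfg n) by lia. reflexivity.
Qed.

Lemma sumR_le n f g : (forall k, (k < n)%nat -> f k <= g k) -> sumR n f <= sumR n g.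
Proof.
  induction n as [|n IH]; simpl; intros Hfg; [lra|].
  pose proof (Hfg n ltac:(lia)). pose proof (IH ltac:(intros; apply Hfg; lia)). lra.
Qed.

Lemma sumR_nonneg n f : (forall k, (k < n)%nat -> 0 <= f k) -> 0 <= sumR n f.
Proof.
  induction n as [|n IH]; simpl; intros Hf; [lra|].
  pose proof (Hf n ltac:(lia)). pose proof (IH ltac:(intros; apply Hf; lia)). lra.
Qed.

Lemma sumR_mulr n f a : sumR n (fun k => f k * a) = sumR n f * a.
Proof. induction n as [|n IH]; simpl; [ring | rewrite IH; ring]. Qed.

Lemma sumR_ge_term n f k : (forall j, (j < n)%nat -> 0 <= f j) -> (k < n)%nat ->
  f k <= sumR n f.
Proof.
  induction n as [|n IH]; intros Hf Hk; [lia|]. simpl.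
  pose proof (sumR_nonneg n f ltac:(intros; apply Hf; lia)).
  destruct (Nat.eq_dec k n) as [->|Hne]; [lra|].
  pose proof (IH ltac:(intros; apply Hf; lia) ltac:(lia)). pose proof (Hf n ltac:(lia)). lra.
Qed.

Lemma sumR_eq_pair n f g i : (i + 2 <= n)%nat ->
  (forall k, k <> i -> k <> S i -> f k = g k) -> f i + f (S i) = g i + g (S i) ->
  sumR n f = sumR n g.
Proof.
  intros Hn Hfg Hpair. induction n as [|n IH]; [lia|]. simpl.
  destruct (Nat.eq_dec n (S i)) as [->|Hne].
  - simpl. rewrite (sumR_ext i f g) by (intros; apply Hfg; lia). lra.
  - rewrite IH, (Hfg n) by lia. reflexivity.
Qed.

Lemma BEDO_BEDT a g d : BEDO a g d = BEDT a (g * d).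
Proof. reflexivity. Qed.

Lemma BEDT_nonneg T d : 0 < T -> 0 <= d -> 0 <= BEDT T d.
Proof.
  unfold BEDT. intros HT Hd. assert (0 <= d / T) by (apply Rdiv_le_0_compat; lra).
  nra.
Qed.

Lemma BEDT_le T d D : 0 < T -> 0 <= d -> d <= D -> BEDT T d <= BEDT T D.
Proof.
  unfold BEDT. intros HT Hd HdD.
  assert (0 <= (D + d) / T) by (apply Rdiv_le_0_compat; lra).
  assert (E : D * (1 + D / T) - d * (1 + d / T) = (D - d) * (1 + (D + d) / T)) by (field; lra).
  nra.
Qed.

Lemma BEDT_le_inv T d D : 0 < T -> 0 <= D -> BEDT T d <= BEDT T D -> d <= D.
Proof.
  intros HT HD Hle. destruct (Rle_or_lt d D) as [|Hlt]; [assumption|].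
  unfold BEDT in Hle.
  assert (E : d * (1 + d / T) - D * (1 + D / T) = (d - D) * (1 + (d + D) / T)) by (field; lra).
  assert (0 < (d + D) / T) by (apply Rdiv_lt_0_compat; lra).
  nra.
Qed.

Lemma BEDO_nonneg a g d : 0 < a -> 0 < g -> 0 <= d -> 0 <= BEDO a g d.
Proof. intros. rewrite BEDO_BEDT. apply BEDT_nonneg; nra. Qed.

Lemma BEDO_le a g d D : 0 < a -> 0 < g -> 0 <= d -> d <= D -> BEDO a g d <= BEDO a g D.
Proof. intros. rewrite !BEDO_BEDT. apply BEDT_le; nra. Qed.

Lemma BEDO_le_inv a g d D : 0 < a -> 0 < g -> 0 <= D -> BEDO a g d <= BEDO a g D -> d <= D.
Proof.
  intros Ha Hg HD. rewrite !BEDO_BEDT. intros Hle.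
  apply BEDT_le_inv in Hle; [|lra|nra]. apply Rmult_le_reg_l with g; lra.
Qed.

(* The positive root of the quadratic [BEDO a g d = b]. *)
Definition BEDO_inv (a g b : R) : R := a / (2 * g) * (sqrt (1 + 4 * b / a) - 1).

Lemma BEDO_inv_nonneg a g b : 0 < a -> 0 < g -> 0 <= b -> 0 <= BEDO_inv a g b.
Proof.
  intros Ha Hg Hb. unfold BEDO_inv.
  assert (1 <= sqrt (1 + 4 * b / a)).
  { assert (0 <= 4 * b / a) by (apply Rdiv_le_0_compat; lra).
    rewrite <- sqrt_1 at 1. apply sqrt_le_1_alt. lra. }
  apply Rmult_le_pos; [apply Rlt_le, Rdiv_lt_0_compat|]; lra.
Qed.

Lemma BEDO_inv_K a g b : 0 < a -> 0 < g -> 0 <= b -> BEDO a g (BEDO_inv a g b) = b.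
Proof.
  intros Ha Hg Hb. unfold BEDO, BEDO_inv.
  assert (0 <= 4 * b / a) by (apply Rdiv_le_0_compat; lra).
  pose proof (sqrt_sqrt (1 + 4 * b / a) ltac:(lra)) as Hsq.
  set (r := sqrt (1 + 4 * b / a)) in *.
  replace (g * (a / (2 * g) * (r - 1)) * (1 + g * (a / (2 * g) * (r - 1)) / a))
    with (a * (r * r - 1) / 4) by (field; lra).
  rewrite Hsq. field. lra.
Qed.

Lemma BED_ratio_le a g T d D : 0 < a -> 0 < g -> 0 < T -> a >= g * T ->
  0 <= d -> d <= D -> BEDT T d * BEDO a g D <= BEDO a g d * BEDT T D.
Proof.
  unfold BEDT, BEDO. intros.
  assert (E : g * d * (1 + g * d / a) * (D * (1 + D / T)) - d * (1 + d / T) * (g * D * (1 + g * D / a))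
     = g * d * D * (D - d) * (a - g * T) / (a * T)) by (field; lra).
  assert (0 <= g * d * D * (D - d) * (a - g * T) / (a * T)).
  { apply Rdiv_le_0_compat; [repeat apply Rmult_le_pos|]; nra. }
  lra.
Qed.

Lemma BEDT_equalize_lt a g T d1 d2 e : 0 < a -> 0 < g -> 0 < T -> a < g * T ->
  0 <= d2 -> d2 < d1 -> 0 <= e ->
  BEDO a g e + BEDO a g e = BEDO a g d1 + BEDO a g d2 ->
  BEDT T d1 + BEDT T d2 < BEDT T e + BEDT T e.
Proof.
  unfold BEDT, BEDO. intros Ha Hg HT Hlt H2 H12 He Hsum.
  assert (Hlin : 2 * e - d1 - d2 = g * (d1 * d1 + d2 * d2 - 2 * e * e) / a).
  { apply (Rmult_eq_reg_l (g * a)); [|nra].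
    replace (g * a * (g * (d1 * d1 + d2 * d2 - 2 * e * e) / a))
      with (g * g * (d1 * d1 + d2 * d2 - 2 * e * e)) by (field; lra).
    apply (Rmult_eq_compat_l a) in Hsum.
    replace (a * (g * e * (1 + g * e / a) + g * e * (1 + g * e / a)))
      with (a * g * (2 * e) + g * g * (2 * e * e)) in Hsum by (field; lra).
    replace (a * (g * d1 * (1 + g * d1 / a) + g * d2 * (1 + g * d2 / a)))
      with (a * g * (d1 + d2) + g * g * (d1 * d1 + d2 * d2)) in Hsum by (field; lra).
    lra. }
  (* strict convexity of the square, as d1 <> d2 *)
  assert (Hsq : 2 * e * e < d1 * d1 + d2 * d2).
  { destruct (Rlt_or_le (2 * e * e) (d1 * d1 + d2 * d2)) as [|Hge]; [assumption|].
    assert (0 <= g * (2 * e * e - d1 * d1 - d2 * d2) / a)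
      by (apply Rdiv_le_0_compat; [apply Rmult_le_pos|]; lra).
    assert (g * (d1 * d1 + d2 * d2 - 2 * e * e) / a = - (g * (2 * e * e - d1 * d1 - d2 * d2) / a))
      by (field; lra).
    nra. }
  assert (E : e * (1 + e / T) + e * (1 + e / T) - (d1 * (1 + d1 / T) + d2 * (1 + d2 / T))
     = (d1 * d1 + d2 * d2 - 2 * e * e) * (g * T - a) / (a * T)).
  { replace (e * (1 + e / T) + e * (1 + e / T) - (d1 * (1 + d1 / T) + d2 * (1 + d2 / T)))
      with ((2 * e - d1 - d2) - (d1 * d1 + d2 * d2 - 2 * e * e) / T) by (field; lra).
    rewrite Hlin. field. lra. }
  assert (0 < (d1 * d1 + d2 * d2 - 2 * e * e) * (g * T - a) / (a * T))
    by (apply Rdiv_lt_0_compat; nra).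
  lra.
Qed.

Lemma is_derive_0_eq (f : R -> R) a b : a <= b ->
  (forall t, a <= t <= b -> is_derive f t 0) -> f b = f a.
Proof.
  intros Hab Hd.
  destruct (MVT_gen f a b (fun _ => 0)) as [c [_ Hc]].
  - intros t Ht. rewrite Rmin_left, Rmax_right in Ht by lra. apply Hd. lra.
  - intros t Ht. rewrite Rmin_left, Rmax_right in Ht by lra.
    apply continuity_pt_filterlim, (@ex_derive_continuous R_AbsRing R_NormedModule).
    exists 0. apply Hd. lra.
  - lra.
Qed.

Lemma is_derive_nonpos_le (f df : R -> R) a b : a <= b ->
  (forall t, a <= t <= b -> is_derive f t (df t)) ->
  (forall t, a <= t <= b -> df t <= 0) -> f b <= f a.
Proof.
  intros Hab Hd Hneg.
  destruct (MVT_gen f a b df) as [c [Hc Heq]].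
  - intros t Ht. rewrite Rmin_left, Rmax_right in Ht by lra. apply Hd. lra.
  - intros t Ht. rewrite Rmin_left, Rmax_right in Ht by lra.
    apply continuity_pt_filterlim, (@ex_derive_continuous R_AbsRing R_NormedModule).
    exists (df t). apply Hd. lra.
  - rewrite Rmin_left, Rmax_right in Hc by lra.
    pose proof (Hneg c Hc). nra.
Qed.

Section GrowthODE.

Variable phi : R -> R.
Hypothesis phi_cont : forall x, 0 < x -> continuity_pt phi x.
Hypothesis phi_pos : forall x, 0 < x -> 0 < phi x.

(* [clock v] is the time needed to grow from log-size 0 to log-size v. *)
Definition clock_rate (v : R) : R := / phi (exp v).
Definition clock (v : R) : R := RInt clock_rate 0 v.

Lemma clock_rate_cont v : continuity_pt clock_rate v.
Proof.
  unfold clock_rate. apply continuity_pt_inv.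
  - apply (continuity_pt_comp exp phi).
    + apply derivable_continuous_pt, derivable_pt_exp.
    + apply phi_cont, exp_pos.
  - apply Rgt_not_eq, phi_pos, exp_pos.
Qed.

Lemma clock_rate_pos v : 0 < clock_rate v.
Proof. apply Rinv_0_lt_compat, phi_pos, exp_pos. Qed.

Lemma is_derive_clock v : is_derive clock v (clock_rate v).
Proof.
  apply (is_derive_RInt clock_rate clock 0).
  - apply filter_forall. intros b. apply (@RInt_correct R_CompleteNormedModule).
    apply ex_RInt_continuous. intros z _. apply continuity_pt_filterlim, clock_rate_cont.
  - apply continuity_pt_filterlim, clock_rate_cont.
Qed.

Lemma clock_lt a b : a < b -> clock a < clock b.
Proof.
  intros Hab.
  destruct (MVT_gen clock a b clock_rate) as [c [_ Hc]].
  - intros; apply is_derive_clock.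
  - intros t _. apply continuity_pt_filterlim, (@ex_derive_continuous R_AbsRing R_NormedModule).
    eexists; apply is_derive_clock.
  - pose proof (clock_rate_pos c). nra.
Qed.

Lemma clock_le_inv a b : clock a <= clock b -> a <= b.
Proof.
  intros Hle. destruct (Rle_or_lt a b) as [|Hlt]; [assumption|].
  apply clock_lt in Hlt. lra.
Qed.

Lemma is_derive_ln_solution (x : R -> R) t : 0 < x t ->
  derivable_pt_lim x t (x t * phi (x t)) -> is_derive (fun s => ln (x s)) t (phi (x t)).
Proof.
  intros Hpos Hder. apply is_derive_Reals in Hder.
  pose proof (is_derive_comp ln x t _ _ (is_derive_ln _ Hpos) Hder) as D.
  unfold scal in D; simpl in D; unfold mult in D; simpl in D.
  replace (phi (x t)) with (x t * phi (x t) * / x t) by (field; lra). exact D.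
Qed.

Lemma clock_solution (x : R -> R) :
  (forall t, 0 <= t <= 1 -> 0 < x t /\ derivable_pt_lim x t (x t * phi (x t))) ->
  forall t, 0 <= t <= 1 -> clock (ln (x t)) = clock (ln (x 0)) + t.
Proof.
  intros Hx t Ht.
  enough (E : clock (ln (x t)) - t = clock (ln (x 0)) - 0) by lra.
  apply (is_derive_0_eq (fun s => clock (ln (x s)) - s)); [lra|].
  intros s Hs. destruct (Hx s ltac:(lra)) as [Hpos Hder].
  pose proof (is_derive_comp clock _ s _ _ (is_derive_clock _)
                (is_derive_ln_solution x s Hpos Hder)) as D.
  pose proof (is_derive_minus _ _ s _ _ D (@is_derive_id R_AbsRing s)) as D'.
  unfold scal, minus, plus, opp, one, mult in D'; simpl in D'.
  unfold mult in D'; simpl in D'.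
  replace 0 with (phi (x s) * clock_rate (ln (x s)) + - 1); [exact D'|].
  unfold clock_rate. rewrite exp_ln by assumption.
  pose proof (phi_pos _ Hpos). field. lra.
Qed.

Variable alphaT : R.
Hypothesis alphaT_pos : 0 < alphaT.
Variable F : R -> R.
Hypothesis F_growth : is_growth_map alphaT phi F.

Lemma clock_growth_map y : clock (alphaT * F y) = clock (alphaT * y) + 1.
Proof.
  destruct (F_growth y) as [x [Hx0 [Hx HFy]]].
  replace (alphaT * F y) with (ln (x 1)) by (rewrite HFy; field; lra).
  rewrite (clock_solution x Hx 1), Hx0, ln_exp by lra. reflexivity.
Qed.

Lemma growth_map_lt y z : y < z -> F y < F z.
Proof.
  intros Hyz.
  assert (Hclock : clock (alphaT * y) < clock (alphaT * z)) by (apply clock_lt; nra).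
  destruct (Rlt_or_le (F y) (F z)) as [|Hle]; [assumption|].
  assert (Hback : clock (alphaT * F z) <= clock (alphaT * F y)).
  { destruct Hle as [Hlt | ->]; [apply Rlt_le, clock_lt; nra | lra]. }
  rewrite !clock_growth_map in Hback. lra.
Qed.

Lemma growth_map_le y z : y <= z -> F y <= F z.
Proof. intros [Hlt | ->]; [apply Rlt_le, growth_map_lt|]; lra. Qed.

Hypothesis phi_noninc : forall x y, 0 < x -> x <= y -> phi y <= phi x.

(* Solutions never cross (by the clock), so the larger one grows at the smaller
   per-capita rate and the gap in log-size shrinks. *)
Lemma growth_map_contraction y z : y <= z -> F z - F y <= z - y.
Proof.
  intros Hyz.
  destruct (F_growth z) as [x1 [Hx10 [Hx1 HFz]]].
  destruct (F_growth y) as [x2 [Hx20 [Hx2 HFy]]].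
  assert (Hord : forall t, 0 <= t <= 1 -> x2 t <= x1 t).
  { intros t Ht.
    destruct (Hx1 t Ht) as [P1 _]. destruct (Hx2 t Ht) as [P2 _].
    assert (Hc : clock (alphaT * y) <= clock (alphaT * z)).
    { destruct Hyz as [Hlt | ->]; [apply Rlt_le, clock_lt; nra | lra]. }
    assert (Hln : ln (x2 t) <= ln (x1 t)).
    { apply clock_le_inv.
      rewrite (clock_solution x1 Hx1 t), (clock_solution x2 Hx2 t), Hx10, Hx20, !ln_exp by lra.
      lra. }
    destruct (Rle_or_lt (x2 t) (x1 t)) as [|Hlt]; [assumption|].
    apply ln_increasing in Hlt; lra. }
  assert (Hgap : ln (x1 1) - ln (x2 1) <= ln (x1 0) - ln (x2 0)).
  { apply (is_derive_nonpos_le (fun t => ln (x1 t) - ln (x2 t))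
             (fun t => phi (x1 t) - phi (x2 t)) 0 1); [lra| |].
    - intros t Ht. destruct (Hx1 t Ht) as [P1 D1]. destruct (Hx2 t Ht) as [P2 D2].
      exact (is_derive_minus _ _ t _ _ (is_derive_ln_solution x1 t P1 D1)
               (is_derive_ln_solution x2 t P2 D2)).
    - intros t Ht. destruct (Hx2 t Ht) as [P2 _].
      pose proof (phi_noninc _ _ P2 (Hord t Ht)). lra. }
  rewrite Hx10, Hx20, !ln_exp in Hgap.
  rewrite HFz, HFy.
  replace (ln (x1 1) / alphaT - ln (x2 1) / alphaT) with ((ln (x1 1) - ln (x2 1)) / alphaT)
    by (field; lra).
  apply Rmult_le_reg_l with alphaT; [assumption|].
  replace (alphaT * ((ln (x1 1) - ln (x2 1)) / alphaT)) with (ln (x1 1) - ln (x2 1))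
    by (field; lra).
  lra.
Qed.

End GrowthODE.

Lemma Yplus_ext F T Y0 d d' j : (forall k, (k <= j)%nat -> d k = d' k) ->
  Yplus F T Y0 d j = Yplus F T Y0 d' j.
Proof.
  induction j as [|j IH]; intros Hdd; simpl.
  - rewrite Hdd by lia. reflexivity.
  - rewrite IH by (intros; apply Hdd; lia). rewrite (Hdd (S j)) by lia. reflexivity.
Qed.

Lemma Yplus_change_last F T Y0 d d' i : (forall k, (k < i)%nat -> d k = d' k) ->
  Yplus F T Y0 d' i = Yplus F T Y0 d i + BEDT T (d i) - BEDT T (d' i).
Proof.
  intros Hdd. destruct i as [|j]; simpl; [lra|].
  rewrite (Yplus_ext F T Y0 d d' j) by (intros; apply Hdd; lia). lra.
Qed.

Lemma Yplus_zero_before F T Y0 d i : (forall k, (k < i)%nat -> d k = 0) ->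
  Yplus F T Y0 d i = Nat.iter i F Y0 - BEDT T (d i).
Proof.
  induction i as [|i IH]; intros Hd; simpl; [reflexivity|].
  rewrite IH by (intros; apply Hd; lia). rewrite (Hd i) by lia.
  unfold BEDT. f_equal. f_equal. ring.
Qed.

Section GrowthMapOrder.

Variable F : R -> R.
Hypothesis F_le : forall y z, y <= z -> F y <= F z.
Hypothesis F_contraction : forall y z, y <= z -> F z - F y <= z - y.

Lemma Yplus_lower_bound T Y0 d i : (forall k, (k <= i)%nat -> 0 <= BEDT T (d k)) ->
  Nat.iter i F Y0 - sumR (S i) (fun k => BEDT T (d k)) <= Yplus F T Y0 d i.
Proof.
  induction i as [|i IH]; intros Hd; simpl; [lra|].
  pose proof (IH ltac:(intros; apply Hd; lia)) as IHi. simpl in IHi.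
  set (S0 := sumR i (fun k => BEDT T (d k))) in *.
  pose proof (sumR_nonneg i (fun k => BEDT T (d k)) ltac:(intros; apply Hd; lia)).
  pose proof (Hd i ltac:(lia)).
  pose proof (F_le _ _ IHi).
  pose proof (F_contraction (Nat.iter i F Y0 - (S0 + BEDT T (d i))) (Nat.iter i F Y0)
                ltac:(unfold S0 in *; lra)).
  lra.
Qed.

Hypothesis F_lt : forall y z, y < z -> F y < F z.

Lemma Yplus_lt_later T Y0 d d' j n : (j <= n)%nat ->
  (forall k, (j < k <= n)%nat -> d k = d' k) ->
  Yplus F T Y0 d' j < Yplus F T Y0 d j -> Yplus F T Y0 d' n < Yplus F T Y0 d n.
Proof.
  induction n as [|n IH]; intros Hjn Hdd Hj.
  - replace j with 0%nat in Hj by lia. exact Hj.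
  - destruct (Nat.eq_dec j (S n)) as [->|Hne]; [exact Hj|]. simpl.
    rewrite (Hdd (S n)) by lia.
    pose proof (F_lt _ _ (IH ltac:(lia) ltac:(intros; apply Hdd; lia) Hj)). lra.
Qed.

(* Lowering the dose on day i costs at most the lost BED_T after one day of growth,
   since F is a contraction. *)
Lemma Yplus_shift_lt T Y0 d d' i : (forall k, (k < i)%nat -> d k = d' k) ->
  BEDT T (d' i) <= BEDT T (d i) ->
  BEDT T (d i) + BEDT T (d (S i)) < BEDT T (d' i) + BEDT T (d' (S i)) ->
  Yplus F T Y0 d' (S i) < Yplus F T Y0 d (S i).
Proof.
  intros Hdd Hle Hgain. simpl.
  rewrite (Yplus_change_last F T Y0 d d' i Hdd).
  pose proof (F_contraction (Yplus F T Y0 d i)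
                (Yplus F T Y0 d i + BEDT T (d i) - BEDT T (d' i)) ltac:(lra)).
  lra.
Qed.

End GrowthMapOrder.

Lemma last_day_dose_eq N a g c k :
  last_day_dose N a g c k = if Nat.eqb k (N - 1) then BEDO_inv a g c else 0.
Proof. reflexivity. Qed.

Lemma feasible_last_day_dose N a g c : (1 <= N)%nat -> 0 < a -> 0 < g -> 0 <= c ->
  feasible N a g c (last_day_dose N a g c).
Proof.
  intros HN Ha Hg Hc. split.
  - intros k _. rewrite last_day_dose_eq.
    destruct (Nat.eqb k (N - 1)); [apply BEDO_inv_nonneg|]; lra.
  - replace N with (S (N - 1)) at 1 by lia. simpl.
    rewrite (sumR_ext _ _ (fun _ => 0)).
    + rewrite last_day_dose_eq, Nat.eqb_refl, BEDO_inv_K by assumption.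
      assert (Hz : forall n, sumR n (fun _ => 0) = 0) by (induction n; simpl; lra).
      rewrite Hz. lra.
    + intros k Hk. rewrite last_day_dose_eq.
      destruct (Nat.eqb_spec k (N - 1)); [lia|]. unfold BEDO. ring.
Qed.

(* Since BED_T/BED_O is non-decreasing and no single dose exceeds BEDO_inv c,
   BED_T(d_k) <= BED_O(d_k) * BED_T(BEDO_inv c) / c for every day. *)
Lemma sum_BEDT_le_last_day N abT abO gam c d : 0 < abT -> 0 < abO -> 0 < gam -> 0 < c ->
  abO >= gam * abT -> feasible N abO gam c d ->
  sumR N (fun k => BEDT abT (d k)) <= BEDT abT (BEDO_inv abO gam c).
Proof.
  intros HT Ha Hg Hc Hab [Hnn Hsum].
  set (D := BEDO_inv abO gam c).
  assert (HD : 0 <= D) by (apply BEDO_inv_nonneg; lra).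
  assert (HDc : BEDO abO gam D = c) by (apply BEDO_inv_K; lra).
  assert (Hday : forall k, (k < N)%nat -> BEDT abT (d k) * c <= BEDO abO gam (d k) * BEDT abT D).
  { intros k Hk. rewrite <- HDc at 1. apply BED_ratio_le; auto.
    apply BEDO_le_inv with abO gam; auto. rewrite HDc.
    eapply Rle_trans; [|exact Hsum].
    apply (sumR_ge_term N (fun k => BEDO abO gam (d k))); auto.
    intros; apply BEDO_nonneg; auto. }
  apply sumR_le in Hday. rewrite !sumR_mulr in Hday.
  pose proof (BEDT_nonneg abT D HT HD).
  apply Rmult_le_reg_r with c; [assumption|]. nra.
Qed.

Lemma last_day_dose_optimal N F abT abO gam c Y0 :
  (1 <= N)%nat -> 0 < abT -> 0 < abO -> 0 < gam -> 0 < c -> abO >= gam * abT ->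
  (forall y z, y <= z -> F y <= F z) -> (forall y z, y <= z -> F z - F y <= z - y) ->
  optimal N F abT abO gam c Y0 (last_day_dose N abO gam c).
Proof.
  intros HN HT Ha Hg Hc Hab F_le F_contraction.
  split; [apply feasible_last_day_dose; [assumption | lra ..]|].
  intros d' Hfeas.
  rewrite Yplus_zero_before.
  2: { intros k Hk. rewrite last_day_dose_eq. destruct (Nat.eqb_spec k (N - 1)); [lia | reflexivity]. }
  rewrite last_day_dose_eq, Nat.eqb_refl.
  pose proof (Yplus_lower_bound F F_le F_contraction abT Y0 d' (N - 1)
                ltac:(intros; apply BEDT_nonneg; [|apply (proj1 Hfeas)]; lia || lra)) as Hlow.
  replace (S (N - 1)) with N in Hlow by lia.
  pose proof (sum_BEDT_le_last_day N abT abO gam c d' HT Ha Hg Hc Hab Hfeas).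
  lra.
Qed.

Lemma optimal_dose_nondecreasing N F abT abO gam c Y0 d :
  0 < abT -> 0 < abO -> 0 < gam -> abO < gam * abT ->
  (forall y z, y < z -> F y < F z) -> (forall y z, y <= z -> F z - F y <= z - y) ->
  optimal N F abT abO gam c Y0 d -> forall i, (i + 1 < N)%nat -> d i <= d (S i).
Proof.
  intros HT Ha Hg Hab F_lt F_contraction [[Hnn Hsum] Hopt] i Hi.
  destruct (Rle_or_lt (d i) (d (S i))) as [|Hlt]; [assumption|]. exfalso.
  pose proof (Hnn i ltac:(lia)) as Hd1. pose proof (Hnn (S i) ltac:(lia)) as Hd2.
  set (m := (BEDO abO gam (d i) + BEDO abO gam (d (S i))) / 2).
  pose proof (BEDO_le abO gam _ _ Ha Hg Hd2 (Rlt_le _ _ Hlt)).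
  pose proof (BEDO_nonneg abO gam _ Ha Hg Hd2).
  assert (Hm : 0 <= m) by (unfold m; lra).
  set (e := BEDO_inv abO gam m).
  pose proof (BEDO_inv_nonneg abO gam m Ha Hg Hm) as He.
  pose proof (BEDO_inv_K abO gam m Ha Hg Hm) as Hem. fold e in He, Hem.
  assert (Hei : e <= d i) by (apply BEDO_le_inv with abO gam; auto; unfold m in Hem; lra).
  set (d' := fun k => if (Nat.eqb k i || Nat.eqb k (S i))%bool then e else d k).
  assert (Hdi : d' i = e) by (unfold d'; rewrite Nat.eqb_refl; reflexivity).
  assert (HdSi : d' (S i) = e)
    by (unfold d'; rewrite Nat.eqb_refl, Bool.orb_true_r; reflexivity).
  assert (Hdo : forall k, k <> i -> k <> S i -> d k = d' k).
  { intros k Hk1 Hk2. unfold d'.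
    destruct (Nat.eqb_spec k i), (Nat.eqb_spec k (S i)); simpl; lia || reflexivity. }
  assert (Hfeas : feasible N abO gam c d').
  { split.
    - intros k Hk. destruct (Nat.eq_dec k i) as [->|]; [rewrite Hdi; lra|].
      destruct (Nat.eq_dec k (S i)) as [->|]; [rewrite HdSi; lra|].
      rewrite <- Hdo by assumption. auto.
    - rewrite (sumR_eq_pair N _ (fun k => BEDO abO gam (d k)) i); [exact Hsum|lia| |].
      + intros k Hk1 Hk2. rewrite Hdo; auto.
      + rewrite Hdi, HdSi, Hem. unfold m. lra. }
  pose proof (BEDT_equalize_lt abO gam abT (d i) (d (S i)) e Ha Hg HT Hab Hd2 Hlt He
                ltac:(rewrite Hem; unfold m; lra)).
  assert (Hstep : Yplus F abT Y0 d' (S i) < Yplus F abT Y0 d (S i)).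
  { apply Yplus_shift_lt; [assumption| intros; apply Hdo; lia | |]; rewrite Hdi.
    - apply BEDT_le; lra.
    - rewrite HdSi. assumption. }
  pose proof (Yplus_lt_later F F_lt abT Y0 d d' (S i) (N - 1) ltac:(lia)
                ltac:(intros; apply Hdo; lia) Hstep).
  specialize (Hopt d' Hfeas). lra.
Qed.

Theorem theorem3
  (N : nat) (alphaT betaT abO gam c X0 : R) (phi F : R -> R)
  (HN : (1 <= N)%nat)
  (HaT : 0 < alphaT) (HbT : 0 < betaT) (HabO : 0 < abO)
  (Hgam : 0 < gam < 1) (Hc : 0 < c) (HX0 : 0 < X0)
  (Hphi_cont : forall x, 0 < x -> continuity_pt phi x)
  (Hphi_noninc : forall x y, 0 < x -> x <= y -> phi y <= phi x)
  (Hphi_pos : forall x, 0 < x -> 0 < phi x)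
  (HF : is_growth_map alphaT phi F) :
  let abT := alphaT / betaT in
  let Y0 := ln X0 / alphaT in
  (abO >= gam * abT ->
     optimal N F abT abO gam c Y0 (last_day_dose N abO gam c)) /\
  (abO < gam * abT ->
     forall d, optimal N F abT abO gam c Y0 d ->
       forall i, (i + 1 < N)%nat -> d i <= d (i + 1)%nat).
Proof.
  intros abT Y0.
  assert (HT : 0 < abT) by (apply Rdiv_lt_0_compat; lra).
  pose proof (growth_map_lt phi Hphi_cont Hphi_pos alphaT HaT F HF) as F_lt.
  pose proof (growth_map_le phi Hphi_cont Hphi_pos alphaT HaT F HF) as F_le.
  pose proof (growth_map_contraction phi Hphi_cont Hphi_pos alphaT HaT F HF Hphi_noninc)
    as F_contraction.
  split.
  - intros Hab. apply last_day_dose_optimal; lra || assumption.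
  - intros Hab d Hopt i Hi. rewrite Nat.add_1_r.
    exact (optimal_dose_nondecreasing N F abT abO gam c Y0 d HT HabO (proj1 Hgam) Hab
             F_lt F_contraction Hopt i Hi).
Qed.
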